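(* Let $\sigma_0,\sigma_\epsilon>0$, $\theta_0\in\mathbb{R}$, prior $\Theta\sim N(\theta_0,\sigma_0^2)$, signal $X=\Theta+\epsilon$ with $\epsilon\sim\mathrm{Laplace}(0,\sigma_\epsilon)$ independent of $\Theta$, and let $\theta_1(x)=\mathbb{E}[\Theta\mid X=x]$. With $a=\sqrt2\sigma_0/\sigma_\epsilon$, the DeGroot coefficient $\omega=\frac{d\theta_1}{dx}\big|_{x=\theta_0}$ is $$\omega=\frac a2\Bigl(\frac{2}{\sqrt\pi\,\operatorname{erfcx}(a/2)}-a\Bigr),$$ where $\operatorname{erfcx}(y)=e^{y^2}\bigl(1-\frac{2}{\sqrt\pi}\int_0^y e^{-t^2}dt\bigr)$.
   Context: $\mathrm{Laplace}(\mu,s)$ has density $t\mapsto\frac{1}{2s}e^{-|t-\mu|/s}$. The posterior mean is $\theta_1(x)=\frac{\int\theta f_\Theta(\theta)l_\epsilon(x-\theta)d\theta}{\int f_\Theta(\theta)l_\epsilon(x-\theta)d\theta}$. *)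

From Stdlib Require Import Reals.
From Coquelicot Require Import Coquelicot.
Open Scope R_scope.

Definition normal_pdf (m s t : R) : R :=
  / (s * sqrt (2 * PI)) * exp (- (t - m) ^ 2 / (2 * s ^ 2)).

Definition laplace_pdf (mu s t : R) : R :=
  / (2 * s) * exp (- Rabs (t - mu) / s).

Definition RInt_R (f : R -> R) : R :=
  RInt_gen f (Rbar_locally m_infty) (Rbar_locally p_infty).

(* posterior mean E[Theta | X = x] for Theta ~ N(theta0, s0^2),
   X = Theta + eps, eps ~ Laplace(0, se) independent of Theta *)
Definition theta1 (theta0 s0 se x : R) : R :=
  RInt_R (fun th => th * normal_pdf theta0 s0 th * laplace_pdf 0 se (x - th))
  / RInt_R (fun th => normal_pdf theta0 s0 th * laplace_pdf 0 se (x - th)).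

Definition erfcx (y : R) : R :=
  exp (y ^ 2) * (1 - 2 / sqrt PI * RInt (fun t => exp (- t ^ 2)) 0 y).

(* With E y = RInt gauss 0 y and gauss y = exp (- y ^ 2): on t < x the product of the prior
   density with the Laplace factor exp (- (x - t) / se) is, after completing the square,
   exp (- (x - theta0) / se) times a Gaussian in t centred at theta0 + s0^2 / se, and on t > x
   it is exp ((x - theta0) / se) times one centred at theta0 - s0^2 / se.  Hence numerator and
   denominator of theta1 are explicit in E and gauss, given E (+-oo) = +- sqrt PI / 2, which
   comes from the constancy of E x ^ 2 + RInt (fun t => exp (- x^2 (1 + t^2)) / (1 + t^2)) 0 1.
   At x = theta0 the two halves are mirror images, so the denominator is stationary there and
   theta1' (theta0) is the slope of the numerator divided by the denominator. *)

From Stdlib Require Import Reals Lra.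
From Coquelicot Require Import Coquelicot.
Open Scope R_scope.

Definition gauss (y : R) : R := exp (- y ^ 2).

Definition integral0_gauss (x : R) : R := RInt gauss 0 x.

Lemma gauss_pos y : 0 < gauss y.
Proof. apply exp_pos. Qed.

Lemma gauss_0 : gauss 0 = 1.
Proof. unfold gauss; rewrite <- exp_0; f_equal; ring. Qed.

Lemma gauss_opp y : gauss (- y) = gauss y.
Proof. unfold gauss; f_equal; ring. Qed.

Lemma gauss_le_1 y : gauss y <= 1.
Proof.
  unfold gauss; rewrite <- exp_0.
  destruct (pow2_ge_0 y) as [Hy | Hy].
  - left; apply exp_increasing; lra.
  - rewrite <- Hy, Ropp_0; lra.
Qed.

Lemma is_derive_gauss y : is_derive gauss y (- 2 * y * gauss y).
Proof. unfold gauss; auto_derive; [easy|]; simpl; ring. Qed.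

Lemma ex_derive_gauss y : ex_derive gauss y.
Proof. eexists; apply is_derive_gauss. Qed.

Lemma Derive_gauss y : Derive (fun z => gauss z) y = - 2 * y * gauss y.
Proof. apply is_derive_unique, is_derive_gauss. Qed.

Lemma continuous_gauss y : continuous gauss y.
Proof. apply (ex_derive_continuous (V := R_NormedModule)), ex_derive_gauss. Qed.

Lemma ex_RInt_gauss a b : ex_RInt gauss a b.
Proof. apply (ex_RInt_continuous (V := R_CompleteNormedModule)); intros; apply continuous_gauss. Qed.

Lemma is_derive_integral0_gauss x : is_derive integral0_gauss x (gauss x).
Proof.
  apply is_derive_RInt with 0; [|apply continuous_gauss].
  apply filter_forall; intros y; apply (RInt_correct (V := R_CompleteNormedModule)), ex_RInt_gauss.
Qed.

Lemma ex_derive_integral0_gauss x : ex_derive integral0_gauss x.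
Proof. eexists; apply is_derive_integral0_gauss. Qed.

Lemma Derive_integral0_gauss x : Derive (fun y => integral0_gauss y) x = gauss x.
Proof. apply is_derive_unique, is_derive_integral0_gauss. Qed.

Lemma integral0_gauss_0 : integral0_gauss 0 = 0.
Proof. apply (RInt_point (V := R_CompleteNormedModule)). Qed.

Lemma integral0_gauss_opp x : integral0_gauss (- x) = - integral0_gauss x.
Proof.
  pose proof (RInt_comp_lin gauss (-1) 0 0 x (ex_RInt_gauss _ _)) as Hlin.
  replace (-1 * 0 + 0) with 0 in Hlin by ring.
  replace (-1 * x + 0) with (- x) in Hlin by ring.
  unfold integral0_gauss; rewrite <- Hlin.
  rewrite (RInt_ext _ (fun y => scal (-1) (gauss y))).
  - rewrite (RInt_scal (V := R_CompleteNormedModule)) by apply ex_RInt_gauss.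
    unfold scal; simpl; unfold mult; simpl; ring.
  - intros y _; rewrite <- gauss_opp; f_equal; f_equal; ring.
Qed.

(** * The Gaussian integral *)

Definition gauss_aux (x : R) : R :=
  RInt (fun t => gauss x * gauss (x * t) / (1 + t ^ 2)) 0 1.

Lemma one_plus_sqr_pos t : 0 < 1 + t ^ 2.
Proof. pose proof (pow2_ge_0 t); lra. Qed.

Lemma continuity_pt_gauss y : continuity_pt gauss y.
Proof. apply continuity_pt_filterlim, continuous_gauss. Qed.

Lemma is_derive_gauss_aux_integrand x t :
  is_derive (fun u => gauss u * gauss (u * t) / (1 + t ^ 2)) x
    (- 2 * x * gauss x * gauss (x * t)).
Proof.
  pose proof (one_plus_sqr_pos t).
  auto_derive.
  - repeat split; try (apply ex_derive_gauss); lra.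
  - rewrite !Derive_gauss; simpl; field; lra.
Qed.

Lemma continuous_gauss_aux_integrand x t :
  continuous (fun t => gauss x * gauss (x * t) / (1 + t ^ 2)) t.
Proof.
  apply (ex_derive_continuous (V := R_NormedModule)).
  pose proof (one_plus_sqr_pos t).
  auto_derive; repeat split; try (apply ex_derive_gauss); lra.
Qed.

Lemma ex_RInt_gauss_aux_integrand x :
  ex_RInt (fun t => gauss x * gauss (x * t) / (1 + t ^ 2)) 0 1.
Proof.
  apply (ex_RInt_continuous (V := R_CompleteNormedModule)); intros t _.
  apply continuous_gauss_aux_integrand.
Qed.

(* Differentiation under the integral sign, then the substitution [y = x t]. *)
Lemma is_derive_gauss_aux x :
  is_derive gauss_aux x (- 2 * gauss x * integral0_gauss x).
Proof.
  pose proof (fun u t => is_derive_unique _ _ _ (is_derive_gauss_aux_integrand u t)) as Hd.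
  replace (- 2 * gauss x * integral0_gauss x)
    with (RInt (fun t => Derive (fun u => gauss u * gauss (u * t) / (1 + t ^ 2)) x) 0 1).
  - apply (is_derive_RInt_param (fun u t => gauss u * gauss (u * t) / (1 + t ^ 2))).
    + apply filter_forall; intros y t _; eexists; apply is_derive_gauss_aux_integrand.
    + intros t _.
      apply continuity_2d_pt_ext with (fun u v => - 2 * u * gauss u * gauss (u * v));
        [intros u v; symmetry; apply Hd|].
      repeat apply continuity_2d_pt_mult; try apply continuity_2d_pt_const;
        try apply continuity_2d_pt_id1.
      * apply continuity_1d_2d_pt_comp; [apply continuity_pt_gauss | apply continuity_2d_pt_id1].
      * apply continuity_1d_2d_pt_comp; [apply continuity_pt_gauss|].
        apply continuity_2d_pt_mult; [apply continuity_2d_pt_id1 | apply continuity_2d_pt_id2].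
    + apply filter_forall; intros y; apply ex_RInt_gauss_aux_integrand.
  - pose proof (RInt_comp_lin gauss x 0 0 1 (ex_RInt_gauss _ _)) as Hlin.
    rewrite Rmult_0_r, Rmult_1_r, !Rplus_0_r in Hlin.
    unfold integral0_gauss; rewrite <- Hlin.
    rewrite <- (RInt_scal (V := R_CompleteNormedModule)).
    + apply RInt_ext; intros t _; rewrite Hd.
      unfold scal; simpl; unfold mult; simpl; rewrite Rplus_0_r; ring.
    + apply (ex_RInt_comp_lin gauss), ex_RInt_gauss.
Qed.

Lemma gauss_aux_0 : gauss_aux 0 = PI / 4.
Proof.
  unfold gauss_aux.
  rewrite (RInt_ext _ (fun t => / (1 + t ^ 2))).
  2:{ intros t _; rewrite Rmult_0_l, gauss_0, Rmult_1_l; apply Rmult_1_l. }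
  rewrite (is_RInt_unique _ _ _ (atan 1 - atan 0)), atan_1, atan_0; [lra|].
  apply (is_RInt_derive (V := R_CompleteNormedModule) atan); intros t _.
  - replace (1 + t ^ 2) with (1 + t²) by (unfold Rsqr; ring); apply is_derive_atan.
  - apply (ex_derive_continuous (V := R_NormedModule)).
    pose proof (one_plus_sqr_pos t); auto_derive; lra.
Qed.

Lemma integral0_gauss_sqr_add_gauss_aux x : integral0_gauss x ^ 2 + gauss_aux x = PI / 4.
Proof.
  set (h y := integral0_gauss y ^ 2 + gauss_aux y).
  assert (Hh : forall y, is_derive h y 0).
  { intros y; unfold h; auto_derive.
    - split; [apply ex_derive_integral0_gauss|].
      split; [eexists; apply is_derive_gauss_aux | easy].
    - rewrite Derive_integral0_gauss,
        (is_derive_unique (fun z : R => gauss_aux z) _ _ (is_derive_gauss_aux y)).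
      simpl; ring. }
  assert (Hh0 : h 0 = PI / 4).
  { unfold h; rewrite integral0_gauss_0, gauss_aux_0; ring. }
  fold (h x); rewrite <- Hh0.
  destruct (Rtotal_order x 0) as [Hx | [-> | Hx]]; [| reflexivity |].
  - apply eq_is_derive; [intros; apply Hh | exact Hx].
  - symmetry; apply eq_is_derive; [intros; apply Hh | exact Hx].
Qed.

Lemma gauss_aux_pos x : 0 < gauss_aux x.
Proof.
  apply RInt_gt_0; [lra | | intros; apply continuous_gauss_aux_integrand].
  intros t _; pose proof (one_plus_sqr_pos t).
  apply Rdiv_lt_0_compat; [apply Rmult_lt_0_compat; apply gauss_pos | lra].
Qed.

Lemma gauss_aux_le_gauss x : gauss_aux x <= gauss x.
Proof.
  replace (gauss x) with (RInt (fun _ => gauss x) 0 1)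
    by (rewrite RInt_const; unfold scal; simpl; unfold mult; simpl; ring).
  apply RInt_le; [lra | apply ex_RInt_gauss_aux_integrand | apply ex_RInt_const |].
  intros t _; pose proof (one_plus_sqr_pos t); pose proof (gauss_pos x).
  pose proof (gauss_le_1 (x * t)); pose proof (gauss_pos (x * t)); pose proof (pow2_ge_0 t).
  apply Rle_div_l; [lra|]; nra.
Qed.

Lemma sqrt_PI_div_2_sqr : (sqrt PI / 2) ^ 2 = PI / 4.
Proof.
  unfold Rdiv; rewrite Rpow_mult_distr, pow2_sqrt by (left; apply PI_RGT_0); field.
Qed.

Lemma sqrt_PI_pos : 0 < sqrt PI.
Proof. apply sqrt_lt_R0, PI_RGT_0. Qed.

Lemma integral0_gauss_lt x : integral0_gauss x < sqrt PI / 2.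
Proof.
  pose proof (integral0_gauss_sqr_add_gauss_aux x); pose proof (gauss_aux_pos x).
  pose proof sqrt_PI_div_2_sqr; pose proof sqrt_PI_pos; nra.
Qed.

Lemma integral0_gauss_ge_0 x : 0 <= x -> 0 <= integral0_gauss x.
Proof.
  intros Hx; apply RInt_ge_0; [exact Hx | apply ex_RInt_gauss |].
  intros; left; apply gauss_pos.
Qed.

Lemma is_lim_comp_opp_p f l : is_lim f p_infty l -> is_lim (fun y => f (- y)) m_infty l.
Proof.
  intros Hf; apply (is_lim_comp f Ropp m_infty l p_infty Hf).
  - apply (is_lim_opp (fun y => y) m_infty m_infty), is_lim_id.
  - exists 0; intros; discriminate.
Qed.

Lemma is_lim_gauss_p : is_lim gauss p_infty 0.
Proof.
  apply (is_lim_comp exp (fun y => - y ^ 2) p_infty 0 m_infty is_lim_exp_m).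
  - apply (is_lim_opp (fun y => y ^ 2) p_infty p_infty).
    apply (is_lim_ext (fun y => y * y)); [intros; simpl; ring|].
    apply (is_lim_mult _ _ p_infty p_infty p_infty); try apply is_lim_id; easy.
  - exists 0; intros; discriminate.
Qed.

Lemma is_lim_gauss_m : is_lim gauss m_infty 0.
Proof.
  apply (is_lim_ext (fun y => gauss (- y))); [intros; apply gauss_opp|].
  apply is_lim_comp_opp_p, is_lim_gauss_p.
Qed.

Lemma is_lim_gauss_aux_p : is_lim gauss_aux p_infty 0.
Proof.
  apply (is_lim_le_le_loc (fun _ => 0) gauss); [| apply is_lim_const | apply is_lim_gauss_p].
  exists 0; intros x _; split; [left; apply gauss_aux_pos | apply gauss_aux_le_gauss].
Qed.

(* For [x >= 0] the identity above gives [integral0_gauss x = sqrt (PI/4 - gauss_aux x)]. *)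
Lemma is_lim_integral0_gauss_p : is_lim integral0_gauss p_infty (sqrt PI / 2).
Proof.
  replace (sqrt PI / 2) with (sqrt (PI / 4 - 0))
    by (rewrite Rminus_0_r, <- sqrt_PI_div_2_sqr, sqrt_pow2; [| pose proof sqrt_PI_pos]; lra).
  apply (is_lim_ext_loc (fun x => sqrt (PI / 4 - gauss_aux x))).
  - exists 0; intros x Hx.
    rewrite <- (integral0_gauss_sqr_add_gauss_aux x), Rplus_minus_r.
    apply sqrt_pow2, integral0_gauss_ge_0; lra.
  - apply (is_lim_comp_continuous gauss_aux (fun v => sqrt (PI / 4 - v))).
    + apply is_lim_gauss_aux_p.
    + apply continuous_sqrt_comp, (ex_derive_continuous (V := R_NormedModule)); auto_derive; easy.
Qed.

Lemma is_lim_integral0_gauss_m : is_lim integral0_gauss m_infty (- (sqrt PI / 2)).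
Proof.
  apply (is_lim_ext (fun y => - integral0_gauss (- y))).
  - intros y; rewrite integral0_gauss_opp; ring.
  - apply (is_lim_opp (fun y => integral0_gauss (- y)) m_infty (sqrt PI / 2)).
    apply is_lim_comp_opp_p, is_lim_integral0_gauss_p.
Qed.

(** * Gaussian integrals over half-lines *)

Lemma filterlim_at_point (F : R -> R) (x : R) : filterlim F (at_point x) (locally (F x)).
Proof. intros P HP; exact (locally_singleton _ _ HP). Qed.

Lemma is_RInt_gen_antiderivative {Fa Fb : (R -> Prop) -> Prop} {FFa : Filter Fa} {FFb : Filter Fb}
  (F f : R -> R) (la lb : R) :
  (forall t, is_derive F t (f t)) -> (forall t, continuous f t) ->
  filterlim F Fa (locally la) -> filterlim F Fb (locally lb) ->
  is_RInt_gen f Fa Fb (lb - la).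
Proof.
  intros HF Hf Ha Hb.
  apply (is_RInt_gen_ext (Derive F)).
  - apply filter_forall; intros ab t _; apply is_derive_unique, HF.
  - apply is_RInt_gen_Derive; trivial; apply filter_forall; intros ab t _.
    + eexists; apply HF.
    + apply (continuous_ext f); [intros; symmetry; apply is_derive_unique, HF | apply Hf].
Qed.

Lemma is_lim_affine_p mu b : 0 < b -> is_lim (fun x => (x - mu) / b) p_infty p_infty.
Proof.
  intros Hb P [M HM]; exists (M * b + mu); intros x Hx.
  apply HM, Rlt_div_r; lra.
Qed.

Lemma is_lim_affine_m mu b : 0 < b -> is_lim (fun x => (x - mu) / b) m_infty m_infty.
Proof.
  intros Hb P [M HM]; exists (M * b + mu); intros x Hx.
  apply HM, Rlt_div_l; lra.
Qed.

Lemma continuous_gauss_affine mu b t : b <> 0 -> continuous (fun t => gauss ((t - mu) / b)) t.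
Proof.
  intros Hb; apply (ex_derive_continuous (V := R_NormedModule)).
  auto_derive; apply ex_derive_gauss.
Qed.

Definition gauss_cdf (mu b x : R) : R := b * (sqrt PI / 2 + integral0_gauss ((x - mu) / b)).

Definition gauss_moment (mu b x : R) : R :=
  mu * gauss_cdf mu b x - b ^ 2 / 2 * gauss ((x - mu) / b).

Definition gauss_tail (mu b x : R) : R := b * sqrt PI - gauss_cdf mu b x.

Definition gauss_moment_tail (mu b x : R) : R := mu * (b * sqrt PI) - gauss_moment mu b x.

Lemma is_derive_gauss_cdf mu b x : b <> 0 -> is_derive (gauss_cdf mu b) x (gauss ((x - mu) / b)).
Proof.
  intros Hb; unfold gauss_cdf; auto_derive.
  - apply ex_derive_integral0_gauss.
  - rewrite Derive_integral0_gauss; unfold Rminus, Rdiv; simpl; field; exact Hb.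
Qed.

Lemma is_derive_gauss_moment mu b x :
  b <> 0 -> is_derive (gauss_moment mu b) x (x * gauss ((x - mu) / b)).
Proof.
  intros Hb; unfold gauss_moment, gauss_cdf; auto_derive.
  - repeat split; [apply ex_derive_integral0_gauss | apply ex_derive_gauss].
  - rewrite Derive_integral0_gauss, Derive_gauss; unfold Rminus, Rdiv; simpl; field; exact Hb.
Qed.

Lemma is_derive_gauss_tail mu b x :
  b <> 0 -> is_derive (gauss_tail mu b) x (- gauss ((x - mu) / b)).
Proof.
  intros Hb; replace (- gauss ((x - mu) / b)) with (0 - gauss ((x - mu) / b)) by ring.
  apply (is_derive_minus (fun _ => b * sqrt PI) (gauss_cdf mu b) x 0 (gauss ((x - mu) / b))).
  - exact (is_derive_const _ _).
  - apply is_derive_gauss_cdf, Hb.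
Qed.

Lemma is_derive_gauss_moment_tail mu b x :
  b <> 0 -> is_derive (gauss_moment_tail mu b) x (- (x * gauss ((x - mu) / b))).
Proof.
  intros Hb; replace (- (x * gauss ((x - mu) / b))) with (0 - x * gauss ((x - mu) / b)) by ring.
  apply (is_derive_minus (fun _ => mu * (b * sqrt PI)) (gauss_moment mu b) x 0).
  - exact (is_derive_const _ _).
  - apply is_derive_gauss_moment, Hb.
Qed.

Lemma is_lim_comp_affine_p mu b f (l : R) :
  0 < b -> is_lim f p_infty l -> is_lim (fun x => f ((x - mu) / b)) p_infty l.
Proof.
  intros Hb Hf; apply (is_lim_comp f _ p_infty l p_infty Hf (is_lim_affine_p mu b Hb)).
  exists 0; intros; discriminate.
Qed.

Lemma is_lim_comp_affine_m mu b f (l : R) :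
  0 < b -> is_lim f m_infty l -> is_lim (fun x => f ((x - mu) / b)) m_infty l.
Proof.
  intros Hb Hf; apply (is_lim_comp f _ m_infty l m_infty Hf (is_lim_affine_m mu b Hb)).
  exists 0; intros; discriminate.
Qed.

Lemma is_lim_gauss_cdf_m mu b : 0 < b -> is_lim (gauss_cdf mu b) m_infty 0.
Proof.
  intros Hb; replace 0 with (b * (sqrt PI / 2 + - (sqrt PI / 2))) by ring.
  apply (is_lim_scal_l _ b _ (sqrt PI / 2 + - (sqrt PI / 2))), is_lim_plus'; [apply is_lim_const|].
  apply is_lim_comp_affine_m, is_lim_integral0_gauss_m; exact Hb.
Qed.

Lemma is_lim_gauss_cdf_p mu b : 0 < b -> is_lim (gauss_cdf mu b) p_infty (b * sqrt PI).
Proof.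
  intros Hb; replace (b * sqrt PI) with (b * (sqrt PI / 2 + sqrt PI / 2)) by field.
  apply (is_lim_scal_l _ b _ (sqrt PI / 2 + sqrt PI / 2)), is_lim_plus'; [apply is_lim_const|].
  apply is_lim_comp_affine_p, is_lim_integral0_gauss_p; exact Hb.
Qed.

Lemma is_lim_gauss_moment_m mu b : 0 < b -> is_lim (gauss_moment mu b) m_infty 0.
Proof.
  intros Hb; replace 0 with (mu * 0 - b ^ 2 / 2 * 0) by ring.
  apply (is_lim_minus' (fun x => mu * gauss_cdf mu b x)).
  - apply (is_lim_scal_l _ mu _ 0), is_lim_gauss_cdf_m, Hb.
  - apply (is_lim_scal_l _ (b ^ 2 / 2) _ 0), is_lim_comp_affine_m, is_lim_gauss_m; exact Hb.
Qed.

Lemma is_lim_gauss_moment_p mu b :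
  0 < b -> is_lim (gauss_moment mu b) p_infty (mu * (b * sqrt PI)).
Proof.
  intros Hb; replace (mu * (b * sqrt PI)) with (mu * (b * sqrt PI) - b ^ 2 / 2 * 0) by ring.
  apply (is_lim_minus' (fun x => mu * gauss_cdf mu b x)).
  - apply (is_lim_scal_l _ mu _ (b * sqrt PI)), is_lim_gauss_cdf_p, Hb.
  - apply (is_lim_scal_l _ (b ^ 2 / 2) _ 0), is_lim_comp_affine_p, is_lim_gauss_p; exact Hb.
Qed.

Lemma is_RInt_gen_gauss_left mu b x : 0 < b ->
  is_RInt_gen (fun t => gauss ((t - mu) / b)) (Rbar_locally m_infty) (at_point x)
    (gauss_cdf mu b x).
Proof.
  intros Hb; rewrite <- (Rminus_0_r (gauss_cdf mu b x)).
  apply (is_RInt_gen_antiderivative (gauss_cdf mu b)).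
  - intros; apply is_derive_gauss_cdf; lra.
  - intros; apply continuous_gauss_affine; lra.
  - apply is_lim_gauss_cdf_m, Hb.
  - apply filterlim_at_point.
Qed.

Lemma is_RInt_gen_gauss_right mu b x : 0 < b ->
  is_RInt_gen (fun t => gauss ((t - mu) / b)) (at_point x) (Rbar_locally p_infty)
    (gauss_tail mu b x).
Proof.
  intros Hb; apply (is_RInt_gen_antiderivative (gauss_cdf mu b)).
  - intros; apply is_derive_gauss_cdf; lra.
  - intros; apply continuous_gauss_affine; lra.
  - apply filterlim_at_point.
  - apply is_lim_gauss_cdf_p, Hb.
Qed.

Lemma continuous_mul_gauss_affine mu b t :
  b <> 0 -> continuous (fun t => t * gauss ((t - mu) / b)) t.
Proof.
  intros Hb; apply (ex_derive_continuous (V := R_NormedModule)).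
  auto_derive; apply ex_derive_gauss.
Qed.

Lemma is_RInt_gen_gauss_moment_left mu b x : 0 < b ->
  is_RInt_gen (fun t => t * gauss ((t - mu) / b)) (Rbar_locally m_infty) (at_point x)
    (gauss_moment mu b x).
Proof.
  intros Hb; rewrite <- (Rminus_0_r (gauss_moment mu b x)).
  apply (is_RInt_gen_antiderivative (gauss_moment mu b)).
  - intros; apply is_derive_gauss_moment; lra.
  - intros; apply continuous_mul_gauss_affine; lra.
  - apply is_lim_gauss_moment_m, Hb.
  - apply filterlim_at_point.
Qed.

Lemma is_RInt_gen_gauss_moment_right mu b x : 0 < b ->
  is_RInt_gen (fun t => t * gauss ((t - mu) / b)) (at_point x) (Rbar_locally p_infty)
    (gauss_moment_tail mu b x).
Proof.
  intros Hb; apply (is_RInt_gen_antiderivative (gauss_moment mu b)).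
  - intros; apply is_derive_gauss_moment; lra.
  - intros; apply continuous_mul_gauss_affine; lra.
  - apply filterlim_at_point.
  - apply is_lim_gauss_moment_p, Hb.
Qed.

(** * The posterior mean near the prior mean *)

Lemma is_RInt_gen_ext_left (f g : R -> R) (x l : R) :
  (forall t, t < x -> f t = g t) ->
  is_RInt_gen f (Rbar_locally m_infty) (at_point x) l ->
  is_RInt_gen g (Rbar_locally m_infty) (at_point x) l.
Proof.
  intros Hfg; apply is_RInt_gen_ext.
  apply Filter_prod with (fun a => a < x) (fun a => a = x); [exists x; auto | reflexivity |].
  intros a y Ha -> t Ht; simpl in Ht; apply Hfg.
  rewrite Rmax_right in Ht by lra; lra.
Qed.

Lemma is_RInt_gen_ext_right (f g : R -> R) (x l : R) :
  (forall t, x < t -> f t = g t) ->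
  is_RInt_gen f (at_point x) (Rbar_locally p_infty) l ->
  is_RInt_gen g (at_point x) (Rbar_locally p_infty) l.
Proof.
  intros Hfg; apply is_RInt_gen_ext.
  apply Filter_prod with (fun a => a = x) (fun a => x < a); [reflexivity | exists x; auto |].
  intros a y -> Hy t Ht; simpl in Ht; apply Hfg.
  rewrite Rmin_left in Ht by lra; lra.
Qed.

Lemma is_derive_div_stationary (f g : R -> R) (x df : R) :
  is_derive f x df -> is_derive g x 0 -> g x <> 0 ->
  is_derive (fun y => f y / g y) x (df / g x).
Proof.
  intros Hf Hg Hgx.
  replace (df / g x) with ((df * g x - f x * 0) / g x ^ 2) by (field; exact Hgx).
  apply is_derive_div; assumption.
Qed.

Lemma is_derive_tilted_sum (k m : R) (f g : R -> R) (df dg : R) : k <> 0 ->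
  is_derive f m df -> is_derive g m dg ->
  is_derive (fun x => exp (- (x - m) / k) * f x + exp ((x - m) / k) * g x) m
    ((g m - f m) / k + df + dg).
Proof.
  intros Hk Hf Hg; auto_derive.
  - split; [eexists; exact Hf | split; [eexists; exact Hg | easy]].
  - rewrite (is_derive_unique (fun x : R => f x) _ _ Hf), (is_derive_unique (fun x : R => g x) _ _ Hg).
    rewrite Rplus_opp_r, Ropp_0, Rmult_0_l, exp_0; simpl; field; exact Hk.
Qed.

Lemma sqrt2_mul_sqr s : (sqrt 2 * s) ^ 2 = 2 * s ^ 2.
Proof. rewrite Rpow_mult_distr, pow2_sqrt; lra. Qed.

Section Posterior.

Variables (m s se : R).
Hypotheses (Hs : 0 < s) (Hse : 0 < se).

Let b := sqrt 2 * s.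
Let mu_l := m + s ^ 2 / se.
Let mu_r := m - s ^ 2 / se.
Let c := / (s * sqrt (2 * PI)) / (2 * se) * exp (s ^ 2 / (2 * se ^ 2)).

Lemma b_pos : 0 < b.
Proof. apply Rmult_lt_0_compat; [apply sqrt_lt_R0 |]; lra. Qed.

Lemma c_pos : 0 < c.
Proof.
  pose proof (sqrt_lt_R0 (2 * PI) ltac:(pose proof PI_RGT_0; lra)).
  repeat apply Rmult_lt_0_compat; try apply Rinv_0_lt_compat; try apply exp_pos;
    try apply Rmult_lt_0_compat; lra.
Qed.

Lemma sqr_div_b y : (y / b) ^ 2 = y ^ 2 / (2 * s ^ 2).
Proof.
  pose proof b_pos.
  replace ((y / b) ^ 2) with (y ^ 2 / b ^ 2) by (field; lra).
  unfold b; rewrite sqrt2_mul_sqr; reflexivity.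
Qed.

(* Completing the square in [t] after the tilt [exp (-|x - t| / se)] on [t < x]. *)
Lemma normal_laplace_left x t : t < x ->
  normal_pdf m s t * laplace_pdf 0 se (x - t) = c * exp (- (x - m) / se) * gauss ((t - mu_l) / b).
Proof.
  intros Ht; unfold normal_pdf, laplace_pdf, gauss, c.
  rewrite Rminus_0_r, Rabs_pos_eq by lra.
  transitivity (/ (s * sqrt (2 * PI)) / (2 * se)
                * exp (- (t - m) ^ 2 / (2 * s ^ 2) + - (x - t) / se));
    [rewrite exp_plus; unfold Rdiv; ring |].
  replace (- (t - m) ^ 2 / (2 * s ^ 2) + - (x - t) / se)
    with (s ^ 2 / (2 * se ^ 2) + (- (x - m) / se + - ((t - mu_l) / b) ^ 2))
    by (rewrite sqr_div_b; unfold mu_l; field; lra).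
  rewrite !exp_plus; ring.
Qed.

Lemma normal_laplace_right x t : x < t ->
  normal_pdf m s t * laplace_pdf 0 se (x - t) = c * exp ((x - m) / se) * gauss ((t - mu_r) / b).
Proof.
  intros Ht; unfold normal_pdf, laplace_pdf, gauss, c.
  rewrite Rminus_0_r, Rabs_left by lra.
  transitivity (/ (s * sqrt (2 * PI)) / (2 * se)
                * exp (- (t - m) ^ 2 / (2 * s ^ 2) + - - (x - t) / se));
    [rewrite exp_plus; unfold Rdiv; ring |].
  replace (- (t - m) ^ 2 / (2 * s ^ 2) + - - (x - t) / se)
    with (s ^ 2 / (2 * se ^ 2) + ((x - m) / se + - ((t - mu_r) / b) ^ 2))
    by (rewrite sqr_div_b; unfold mu_r; field; lra).
  rewrite !exp_plus; ring.
Qed.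

Definition scaled_marginal (x : R) : R :=
  exp (- (x - m) / se) * gauss_cdf mu_l b x
  + exp ((x - m) / se) * gauss_tail mu_r b x.

Definition scaled_first_moment (x : R) : R :=
  exp (- (x - m) / se) * gauss_moment mu_l b x
  + exp ((x - m) / se) * gauss_moment_tail mu_r b x.

Lemma RInt_R_marginal x :
  RInt_R (fun th => normal_pdf m s th * laplace_pdf 0 se (x - th)) = c * scaled_marginal x.
Proof.
  pose proof b_pos as Hb.
  unfold RInt_R; apply (is_RInt_gen_unique (V := R_CompleteNormedModule)
    (Fa := Rbar_locally m_infty) (Fb := Rbar_locally p_infty)).
  replace (c * scaled_marginal x) with
    (plus (c * exp (- (x - m) / se) * gauss_cdf mu_l b x)
          (c * exp ((x - m) / se) * gauss_tail mu_r b x))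
    by (unfold scaled_marginal, plus; simpl; ring).
  apply (is_RInt_gen_Chasles (V := R_NormedModule) _ x).
  - apply (is_RInt_gen_ext_left (fun t => c * exp (- (x - m) / se) * gauss ((t - mu_l) / b)));
      [intros; symmetry; apply normal_laplace_left; lra|].
    apply (is_RInt_gen_scal (fun t => gauss ((t - mu_l) / b))), is_RInt_gen_gauss_left, Hb.
  - apply (is_RInt_gen_ext_right (fun t => c * exp ((x - m) / se) * gauss ((t - mu_r) / b)));
      [intros; symmetry; apply normal_laplace_right; lra|].
    apply (is_RInt_gen_scal (fun t => gauss ((t - mu_r) / b))), is_RInt_gen_gauss_right, Hb.
Qed.

Lemma RInt_R_first_moment x :
  RInt_R (fun th => th * normal_pdf m s th * laplace_pdf 0 se (x - th)) = c * scaled_first_moment x.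
Proof.
  pose proof b_pos as Hb.
  unfold RInt_R; apply (is_RInt_gen_unique (V := R_CompleteNormedModule)
    (Fa := Rbar_locally m_infty) (Fb := Rbar_locally p_infty)).
  replace (c * scaled_first_moment x) with
    (plus (c * exp (- (x - m) / se) * gauss_moment mu_l b x)
          (c * exp ((x - m) / se) * gauss_moment_tail mu_r b x))
    by (unfold scaled_first_moment, plus; simpl; ring).
  apply (is_RInt_gen_Chasles (V := R_NormedModule) _ x).
  - apply (is_RInt_gen_ext_left (fun t => c * exp (- (x - m) / se) * (t * gauss ((t - mu_l) / b))));
      [intros; rewrite (Rmult_assoc t), normal_laplace_left by lra; ring|].
    apply (is_RInt_gen_scal (fun t => t * gauss ((t - mu_l) / b))), is_RInt_gen_gauss_moment_left, Hb.
  - apply (is_RInt_gen_ext_right (fun t => c * exp ((x - m) / se) * (t * gauss ((t - mu_r) / b))));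
      [intros; rewrite (Rmult_assoc t), normal_laplace_right by lra; ring|].
    apply (is_RInt_gen_scal (fun t => t * gauss ((t - mu_r) / b))), is_RInt_gen_gauss_moment_right, Hb.
Qed.

Lemma theta1_scaled x : theta1 m s se x = scaled_first_moment x / scaled_marginal x.
Proof.
  pose proof c_pos.
  unfold theta1; rewrite RInt_R_marginal, RInt_R_first_moment.
  unfold Rdiv; rewrite Rinv_mult.
  replace (c * scaled_first_moment x * (/ c * / scaled_marginal x))
    with (c * / c * (scaled_first_moment x * / scaled_marginal x)) by ring.
  rewrite Rinv_r by lra; ring.
Qed.

Let a := b / se.
Let q := sqrt PI / 2 - integral0_gauss (a / 2).

Lemma s_sqr : s ^ 2 = b ^ 2 / 2.
Proof. unfold b; rewrite sqrt2_mul_sqr; field. Qed.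

Lemma left_arg_at_mean : (m - mu_l) / b = - (a / 2).
Proof. pose proof b_pos; unfold mu_l, a; rewrite s_sqr; field; lra. Qed.

Lemma right_arg_at_mean : (m - mu_r) / b = a / 2.
Proof. pose proof b_pos; unfold mu_r, a; rewrite s_sqr; field; lra. Qed.

Lemma gauss_cdf_left_at_mean : gauss_cdf mu_l b m = b * q.
Proof. unfold gauss_cdf, q; rewrite left_arg_at_mean, integral0_gauss_opp; ring. Qed.

Lemma gauss_tail_right_at_mean : gauss_tail mu_r b m = b * q.
Proof. unfold gauss_tail, gauss_cdf, q; rewrite right_arg_at_mean. field. Qed.

Lemma q_pos : 0 < q.
Proof. unfold q; pose proof (integral0_gauss_lt (a / 2)); lra. Qed.

Lemma scaled_marginal_at_mean : scaled_marginal m = 2 * b * q.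
Proof.
  unfold scaled_marginal; rewrite Rminus_diag, Ropp_0, Rdiv_0_l, exp_0.
  rewrite gauss_cdf_left_at_mean, gauss_tail_right_at_mean; ring.
Qed.

(* At the prior mean the two halves are mirror images, so their slopes cancel. *)
Lemma is_derive_scaled_marginal_at_mean : is_derive scaled_marginal m 0.
Proof.
  pose proof b_pos.
  replace 0 with ((gauss_tail mu_r b m - gauss_cdf mu_l b m) / se
                  + gauss ((m - mu_l) / b) + - gauss ((m - mu_r) / b))
    by (rewrite gauss_cdf_left_at_mean, gauss_tail_right_at_mean, left_arg_at_mean,
          right_arg_at_mean, gauss_opp; field; lra).
  apply is_derive_tilted_sum; [lra | apply is_derive_gauss_cdf | apply is_derive_gauss_tail]; lra.
Qed.

Lemma is_derive_scaled_first_moment_at_mean :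
  is_derive scaled_first_moment m (a * b * (gauss (a / 2) - a * q)).
Proof.
  pose proof b_pos.
  replace (a * b * (gauss (a / 2) - a * q))
    with ((gauss_moment_tail mu_r b m - gauss_moment mu_l b m) / se
          + m * gauss ((m - mu_l) / b) + - (m * gauss ((m - mu_r) / b))).
  - apply is_derive_tilted_sum;
      [lra | apply is_derive_gauss_moment | apply is_derive_gauss_moment_tail]; lra.
  - unfold gauss_moment_tail, gauss_moment.
    rewrite gauss_cdf_left_at_mean, left_arg_at_mean, right_arg_at_mean, gauss_opp.
    replace (gauss_cdf mu_r b m) with (b * sqrt PI - b * q)
      by (rewrite <- gauss_tail_right_at_mean; unfold gauss_tail; ring).
    unfold mu_l, mu_r, a; rewrite s_sqr; field; lra.
Qed.

Lemma is_derive_theta1_at_mean :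
  is_derive (theta1 m s se) m (a / 2 * (gauss (a / 2) / q - a)).
Proof.
  pose proof b_pos; pose proof q_pos.
  apply (is_derive_ext (fun x => scaled_first_moment x / scaled_marginal x));
    [intros; symmetry; apply theta1_scaled |].
  replace (a / 2 * (gauss (a / 2) / q - a))
    with (a * b * (gauss (a / 2) - a * q) / scaled_marginal m)
    by (rewrite scaled_marginal_at_mean; field; lra).
  apply is_derive_div_stationary.
  - apply is_derive_scaled_first_moment_at_mean.
  - apply is_derive_scaled_marginal_at_mean.
  - rewrite scaled_marginal_at_mean; apply Rgt_not_eq; unfold Rgt; nra.
Qed.

End Posterior.

Lemma sqrt_PI_mul_erfcx y :
  sqrt PI * erfcx y = 2 * (sqrt PI / 2 - integral0_gauss y) / gauss y.
Proof.
  pose proof sqrt_PI_pos; pose proof (gauss_pos y).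
  unfold erfcx; change (RInt (fun t => exp (- t ^ 2)) 0 y) with (integral0_gauss y).
  replace (exp (y ^ 2)) with (/ gauss y) by (unfold gauss; rewrite exp_Ropp, Rinv_inv; reflexivity).
  field; lra.
Qed.

Theorem mainTheorem15 (s0 se theta0 : R) (hs0 : 0 < s0) (hse : 0 < se) :
  let a := sqrt 2 * s0 / se in
  is_derive (theta1 theta0 s0 se) theta0
    (a / 2 * (2 / (sqrt PI * erfcx (a / 2)) - a)).
Proof.
  intros a.
  pose proof (integral0_gauss_lt (a / 2)); pose proof (gauss_pos (a / 2)).
  rewrite sqrt_PI_mul_erfcx.
  replace (2 / (2 * (sqrt PI / 2 - integral0_gauss (a / 2)) / gauss (a / 2)))
    with (gauss (a / 2) / (sqrt PI / 2 - integral0_gauss (a / 2))) by (field; lra).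
  apply is_derive_theta1_at_mean; assumption.
Qed.
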